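(* (a) For every $M\ge1$ and every $N\times M$ binary matrix $C_{N,M}=(c_{i,a})$, $$\sum_{X\in\{0,1\}^N}\mu_p(X)\,|\mathcal U_0|\ \ge\ B_{M,C_{N,M},p}:=q\sum_{i=1}^N\prod_{a=1}^M\bigl(1-q^{d_a-1}\bigr)^{c_{i,a}},$$ where $q:=1-p$ and $d_a:=\sum_{l=1}^N c_{l,a}$ is the degree of test $a$. (b) If the bipartite graph $\mathcal G(C_{N,M})$ has girth at least $6$, then the inequality in (a) holds with equality.
   Context: Let $N,M\ge1$ be integers and $p\in(0,1)$. A configuration $X=(x_1,\dots,x_N)\in\{0,1\}^N$ is drawn from $\mu_p(X)=\prod_{i} p^{x_i}(1-p)^{1-x_i}$. $C_{N,M}=(c_{i,a})$ is an $N\times M$ binary matrix; variable $i$ belongs to test $a$ iff $c_{i,a}=1$. Test outcome $T_a=0$ if $c_{i,a}x_i=0$ for all $i$, else $T_a=1$. Variable $i$ is a sure zero if some $a$ has $c_{i,a}=1$ and $T_a=0$; $\mathcal U_0$ is the set of $i$ with $x_i=0$ that are not sure zeros. Convention $0^0=1$. $\mathcal G(C_{N,M})$ is the bipartite graph with variable nodes $1,\dots,N$, test nodes $1,\dots,M$ and an edge between $i$ and $a$ iff $c_{i,a}=1$; girth at least $6$ means it has no cycle of length $4$, i.e. no two distinct variables belong to two common distinct tests. *)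

From mathcomp Require Import all_boot all_order all_algebra.
Set Implicit Arguments. Unset Strict Implicit. Unset Printing Implicit Defensive.
Import Order.TTheory GRing.Theory Num.Theory.
Local Open Scope ring_scope.

Section GroupTesting.
Variables (R : realFieldType) (N M : nat).
Implicit Types (X : {ffun 'I_N -> bool}) (C : 'M[bool]_(N, M)).

Definition mu_p (p : R) X : R :=
  \prod_(i < N) (p ^+ (X i : nat) * (1 - p) ^+ (1 - (X i : nat))%N).

Definition test_outcome C X (a : 'I_M) : bool :=
  [exists i : 'I_N, C i a && X i].

Definition sure_zero C X (i : 'I_N) : bool :=
  [exists a : 'I_M, C i a && ~~ test_outcome C X a].

Definition U0 C X : {set 'I_N} :=
  [set i | ~~ X i & ~~ sure_zero C X i].

Definition test_degree C (a : 'I_M) : nat := \sum_(l < N) (C l a : nat).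

Definition bound_B (p : R) C : R :=
  (1 - p) * \sum_(i < N) \prod_(a < M)
      (1 - (1 - p) ^+ (test_degree C a).-1) ^+ (C i a : nat).

Definition expected_U0 (p : R) C : R :=
  \sum_(X : {ffun 'I_N -> bool}) mu_p p X * (#|U0 C X|)%:R.

(* girth at least 6: no two distinct variables share two distinct tests *)
Definition girth_ge6 C : Prop :=
  forall (i j : 'I_N) (a b : 'I_M), i != j -> a != b ->
    ~~ [&& C i a, C i b, C j a & C j b].

End GroupTesting.

From mathcomp Require Import all_boot all_order all_algebra.
From mathcomp Require Import ring.
Set Implicit Arguments. Unset Strict Implicit. Unset Printing Implicit Defensive.
Import Order.TTheory GRing.Theory Num.Theory.
Local Open Scope ring_scope.

(* Write [q = 1 - p]. A zero variable [i] lies in [U0] iff every test [a]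
   containing [i] also contains another positive variable; the event
   [E_a] that this holds for [a] does not involve [x_i], so
   [P(i \in U0) = q P(/\_a E_a)], and [P(E_a) = 1 - q^(d_a - 1)] when
   [c_{i,a} = 1]. The events [E_a] are increasing, hence positively
   correlated by the Harris inequality, which gives (a). Under girth at
   least 6 two tests through [i] share no other variable, so the [E_a]
   depend on disjoint sets of coordinates and are independent, which
   gives (b). Both facts are proved by averaging out one coordinate at a
   time. *)

Lemma natr_forall (R : comPzSemiRingType) (T : finType) (P : pred T) :
  [forall a, P a]%:R = \prod_a (P a)%:R :> R.
Proof.
case: (boolP [forall a, P a]) => [/forallP allP | ].
  by rewrite big1 // => a _; rewrite allP.
rewrite negb_forall => /existsP [a nPa].
by rewrite (bigD1 a) //= (negbTE nPa) mul0r.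
Qed.

Section ProductMeasure.
Variables (R : realFieldType) (N : nat) (p : R).
Hypotheses (p_ge0 : 0 <= p) (p_le1 : p <= 1).
Notation cfg := {ffun 'I_N -> bool}.
Implicit Types (X Y : cfg) (f g : cfg -> R).

Let q_ge0 : 0 <= 1 - p. Proof. by rewrite subr_ge0. Qed.

Definition weight (b : bool) : R := if b then p else 1 - p.

Definition update X (j : 'I_N) (b : bool) : cfg :=
  [ffun k => if k == j then b else X k].

Definition expect f : R := \sum_X mu_p p X * f X.

Definition average_out (j : 'I_N) f X : R :=
  p * f (update X j true) + (1 - p) * f (update X j false).

Definition average_outs (js : seq 'I_N) f : cfg -> R := foldr average_out f js.

Definition monotone f := forall X Y, (forall k, X k ==> Y k) -> f X <= f Y.

Definition depends_only_on (A : pred 'I_N) f :=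
  forall X Y, (forall k, A k -> X k = Y k) -> f X = f Y.

Lemma mu_pE X : mu_p p X = \prod_i weight (X i).
Proof. by apply: eq_bigr => i _; case: (X i); rewrite /= ?mulr1 ?mul1r. Qed.

Lemma weight_ge0 b : 0 <= weight b.
Proof. by case: b. Qed.

Lemma mu_p_ge0 X : 0 <= mu_p p X.
Proof. by rewrite mu_pE; apply: prodr_ge0 => i _; apply: weight_ge0. Qed.

Lemma expect_indicator_all (F : 'I_N -> bool -> bool) :
  expect (fun X => [forall i, F i (X i)]%:R) =
  \prod_i (p * (F i true)%:R + (1 - p) * (F i false)%:R).
Proof.
rewrite (eq_bigr (fun i => \sum_b weight b * (F i b)%:R)) => [|i _]; last first.
  by rewrite big_bool.
rewrite bigA_distr_bigA /=.
by apply: eq_bigr => X _; rewrite mu_pE natr_forall -big_split.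
Qed.

Lemma eq_expect f g : f =1 g -> expect f = expect g.
Proof. by move=> fg; apply: eq_bigr => X _; rewrite fg. Qed.

Lemma ler_expect f g : (forall X, f X <= g X) -> expect f <= expect g.
Proof. by move=> fg; apply: ler_sum => X _; rewrite ler_wpM2l ?mu_p_ge0. Qed.

Lemma expectZ c f : expect (fun X => c * f X) = c * expect f.
Proof. by rewrite /expect mulr_sumr; apply: eq_bigr => X _; ring. Qed.

Lemma expect_all_zero (S : pred 'I_N) :
  expect (fun X => [forall j, S j ==> ~~ X j]%:R) = (1 - p) ^+ #|S|.
Proof.
rewrite (expect_indicator_all (fun j b => S j ==> ~~ b)).
rewrite -prodr_const [RHS]big_mkcond /=.
apply: eq_bigr => j _; rewrite unfold_in.
by case: (S j); rewrite /= ?mulr0 ?mulr1 ?add0r // addrC subrK.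
Qed.

Lemma expect_cst c : expect (fun=> c) = c.
Proof.
have sum_mu : expect (fun=> 1) = 1.
  rewrite -[RHS](expr0 (1 - p)) -(card0 'I_N) -expect_all_zero.
  by apply: eq_expect => X; rewrite (introT forallP).
by rewrite -[RHS]mulr1 -sum_mu -expectZ; apply: eq_expect => X; rewrite mulr1.
Qed.

Lemma expect_cstB c f : expect (fun X => c - f X) = c - expect f.
Proof.
by rewrite -[in RHS](expect_cst c) /expect -sumrB; apply: eq_bigr => X _; ring.
Qed.

Lemma updateK X j b b' : update (update X j b) j b' = update X j b'.
Proof. by apply/ffunP => k; rewrite !ffunE; case: eqP. Qed.

Lemma update_id X j : update X j (X j) = X.
Proof. by apply/ffunP => k; rewrite !ffunE; case: eqP => // ->. Qed.

Lemma mu_p_update X j b :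
  mu_p p (update X j b) = weight b * \prod_(i | i != j) weight (X i).
Proof.
rewrite mu_pE (bigD1 j) //= ffunE eqxx; congr (_ * _).
by apply: eq_bigr => i /negbTE ne_ij; rewrite ffunE ne_ij.
Qed.

Lemma sum_update (j : 'I_N) (F : cfg -> R) :
  \sum_X F X = \sum_(X : cfg | ~~ X j) (F X + F (update X j true)).
Proof.
rewrite big_split /= (bigID (fun X : cfg => X j)) /= addrC; congr (_ + _).
rewrite (reindex_onto (fun X => update X j true) (fun X => update X j false)) /=;
  last by move=> X Xj; rewrite updateK -Xj update_id.
apply: eq_bigl => X; rewrite ffunE eqxx /= updateK.
apply/eqP/idP => [<- | nXj]; first by rewrite ffunE eqxx.
by rewrite -(negbTE nXj) update_id.
Qed.

Lemma expect_average_out j f : expect (average_out j f) = expect f.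
Proof.
rewrite /expect (sum_update j) [RHS](sum_update j); apply: eq_bigr => X nXj.
have X_def : X = update X j false by rewrite -(negbTE nXj) update_id.
have mu_X : mu_p p X = weight false * \prod_(i | i != j) weight (X i).
  by rewrite {1}X_def mu_p_update.
by rewrite /average_out !updateK -X_def mu_X mu_p_update /=; ring.
Qed.

Lemma expect_average_outs js f : expect (average_outs js f) = expect f.
Proof. by elim: js => //= j js IH; rewrite expect_average_out. Qed.

Lemma average_outs_local js A f : depends_only_on A f ->
  forall X Y, (forall k, k \notin js -> A k -> X k = Y k) ->
  average_outs js f X = average_outs js f Y.
Proof.
move=> f_A; elim: js => [|j js IH] X Y /= XY; first by apply: f_A => k; apply: XY.
rewrite /average_out; congr (_ * _ + _ * _); apply: IH => k k_js Ak; rewrite !ffunE;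
  case: eqP => // /eqP ne_kj; apply: XY => //; by rewrite in_cons negb_or ne_kj.
Qed.

Lemma average_outs_full js A f : depends_only_on A f -> {subset A <= js} ->
  forall X, average_outs js f X = expect f.
Proof.
move=> f_A A_js X; rewrite -(expect_average_outs js) -[LHS]expect_cst.
apply: eq_expect => Y; apply: (average_outs_local f_A) => k k_js Ak.
by rewrite A_js in k_js.
Qed.

Lemma monotone_average_out j f : monotone f -> monotone (average_out j f).
Proof.
move=> f_mono X Y XY; rewrite lerD // ler_wpM2l // f_mono // => k.
  by rewrite !ffunE; case: eqP.
by rewrite !ffunE; case: eqP.
Qed.

Lemma monotone_average_outs js f : monotone f -> monotone (average_outs js f).
Proof. by move=> f_mono; elim: js => //= j js; apply: monotone_average_out. Qed.

Lemma ler_average_out j f g :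
  (forall X, f X <= g X) -> forall X, average_out j f X <= average_out j g X.
Proof. by move=> fg X; rewrite lerD // ler_wpM2l. Qed.

(* Chebyshev's sum inequality for the two-point measure on coordinate [j]. *)
Lemma average_out_mul_ge j f g : monotone f -> monotone g ->
  forall X, average_out j f X * average_out j g X <=
            average_out j (fun Y => f Y * g Y) X.
Proof.
move=> f_mono g_mono X; rewrite /average_out.
have X01 k : update X j false k ==> update X j true k.
  by rewrite !ffunE; case: eqP => // _; apply: implybb.
have := f_mono _ _ X01; have := g_mono _ _ X01.
set f1 := f (update X j true); set f0 := f (update X j false).
set g1 := g (update X j true); set g0 := g (update X j false).
rewrite -subr_ge0 => dg; rewrite -subr_ge0 => df.
have -> : p * (f1 * g1) + (1 - p) * (f0 * g0) =
    (p * f1 + (1 - p) * f0) * (p * g1 + (1 - p) * g0)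
    + p * (1 - p) * ((f1 - f0) * (g1 - g0)) by ring.
by rewrite lerDl !mulr_ge0.
Qed.

Lemma average_outs_mul_ge js f g : monotone f -> monotone g ->
  forall X, average_outs js f X * average_outs js g X <=
            average_outs js (fun Y => f Y * g Y) X.
Proof.
move=> f_mono g_mono; elim: js => [|j js IH] X //=.
apply: le_trans (average_out_mul_ge _ (monotone_average_outs _ f_mono)
                   (monotone_average_outs _ g_mono) X) _.
exact: ler_average_out.
Qed.

Lemma harris_inequality f g : monotone f -> monotone g ->
  expect f * expect g <= expect (fun X => f X * g X).
Proof.
move=> f_mono g_mono; set js := enum 'I_N.
have full h X : average_outs js h X = expect h.
  apply: (@average_outs_full _ predT) => [Y Z YZ | k _]; last by rewrite mem_enum.
  by congr h; apply/ffunP => k; apply: YZ.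
rewrite -[X in _ <= X](expect_average_outs js) -[X in X <= _]expect_cst.
by apply: ler_expect => X; rewrite -(full f X) -(full g X) average_outs_mul_ge.
Qed.

Lemma average_outs_mulr js f g B : depends_only_on B g ->
  (forall j, j \in js -> ~~ B j) ->
  forall X, average_outs js (fun Y => f Y * g Y) X = average_outs js f X * g X.
Proof.
move=> g_B; elim: js => [|j js IH] js_B X //=.
have js_B' k : k \in js -> ~~ B k by move=> k_js; rewrite js_B // in_cons k_js orbT.
have g_update b : g (update X j b) = g X.
  apply: g_B => k Bk; rewrite ffunE; case: eqP => // k_j.
  by move: (js_B j (mem_head _ _)); rewrite -k_j Bk.
by rewrite /average_out !(IH js_B') !g_update; ring.
Qed.

Lemma expect_mul_disjoint f g (A B : pred 'I_N) :
  depends_only_on A f -> depends_only_on B g -> (forall k, A k -> ~~ B k) ->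
  expect (fun X => f X * g X) = expect f * expect g.
Proof.
move=> f_A g_B AB; set js := filter A (enum 'I_N).
rewrite -(expect_average_outs js (fun X => f X * g X)) -expectZ.
apply: eq_expect => X; rewrite (average_outs_mulr f g_B) => [|j]; last first.
  by rewrite mem_filter => /andP [/AB].
by rewrite (average_outs_full f_A) // => k; rewrite mem_filter mem_enum andbT.
Qed.

Section BigProducts.
Variables (I : eqType) (F : I -> cfg -> R).

Lemma monotone_big_mul (s : seq I) :
  (forall a, monotone (F a)) -> (forall a X, 0 <= F a X) ->
  monotone (fun X => \prod_(a <- s) F a X).
Proof.
move=> F_mono F_ge0 X Y XY; elim: s => [|a s IH]; first by rewrite !big_nil.
rewrite !big_cons ler_pM ?F_mono //.
by apply: prodr_ge0 => b _.
Qed.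

Lemma expect_big_mul_ge (s : seq I) :
  (forall a, monotone (F a)) -> (forall a X, 0 <= F a X) ->
  \prod_(a <- s) expect (F a) <= expect (fun X => \prod_(a <- s) F a X).
Proof.
move=> F_mono F_ge0; elim: s => [|a s IH].
  by rewrite big_nil (eq_expect (g := fun=> 1)) ?expect_cst // => X; rewrite big_nil.
rewrite big_cons (eq_expect (fun X => big_cons _ _ _ _ _ _)).
apply: le_trans (harris_inequality (F_mono a) (monotone_big_mul s F_mono F_ge0)).
by rewrite ler_wpM2l // -(expect_cst 0) ler_expect.
Qed.

Lemma expect_big_mul_disjoint (A : I -> pred 'I_N) (s : seq I) :
  (forall a, depends_only_on (A a) (F a)) ->
  (forall a b k, a != b -> A a k -> ~~ A b k) -> uniq s ->
  expect (fun X => \prod_(a <- s) F a X) = \prod_(a <- s) expect (F a).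
Proof.
move=> F_A A_disj; elim: s => [|a s IH] /=.
  by rewrite big_nil (eq_expect (g := fun=> 1)) ?expect_cst // => X; rewrite big_nil.
case/andP=> a_s s_uniq.
rewrite big_cons (eq_expect (fun X => big_cons _ _ _ _ _ _)) -IH //.
apply: (expect_mul_disjoint (F_A a) (B := fun k => has (A^~ k) s)).
  move=> X Y XY; apply: eq_big_seq => b b_s; apply: F_A => k Abk.
  by apply: XY; apply/hasP; exists b.
move=> k Aak; apply/hasP => -[b b_s Abk].
have a_b : a != b by apply: contraNneq a_s => ->.
by move: (A_disj a b k a_b Aak); rewrite Abk.
Qed.

End BigProducts.
End ProductMeasure.

Lemma natr_card (R : pzSemiRingType) (T : finType) (A : pred T) :
  #|A|%:R = \sum_x (x \in A)%:R :> R.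
Proof.
by rewrite -sum1_card natr_sum big_mkcond; apply: eq_bigr => x _; case: (x \in A).
Qed.

Lemma test_degreeE (N M : nat) (C : 'M[bool]_(N, M)) a :
  test_degree C a = #|[pred l | C l a]|.
Proof.
by rewrite -sum1_card big_mkcond; apply: eq_bigr => l _; rewrite inE; case: (C l a).
Qed.

Section VariableInU0.
Variables (R : realFieldType) (N M : nat) (p : R) (C : 'M[bool]_(N, M)) (i : 'I_N).
Hypotheses (p_ge0 : 0 <= p) (p_le1 : p <= 1).
Notation cfg := {ffun 'I_N -> bool}.
Notation expect := (expect p).

(* When [x_i = 0], [spares a X] says that test [a] does not make [i] a sure
   zero. *)
Definition spares (a : 'I_M) (X : cfg) : bool :=
  C i a ==> [exists j, (j != i) && C j a && X j].

Definition partners (a : 'I_M) : pred 'I_N := fun j => (j != i) && C j a && C i a.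

Lemma mem_U0 X : (i \in U0 C X) = ~~ X i && [forall a, spares a X].
Proof.
rewrite inE /sure_zero negb_exists; case: (boolP (X i)) => //= nXi.
apply: eq_forallb => a; rewrite negb_and negbK /spares implybE /test_outcome.
congr (_ || _); apply: eq_existsb => j.
by case: eqP => [-> | _] /=; rewrite ?(negbTE nXi) ?andbF.
Qed.

Lemma spares_local a : depends_only_on (partners a) (fun X => ((spares a X)%:R : R)).
Proof.
move=> X Y XY; congr ((nat_of_bool _)%:R); rewrite /spares.
case: (boolP (C i a)) => //= Cia.
apply: eq_existsb => j; case: (boolP ((j != i) && C j a)) => //= ji_Cja.
by rewrite XY // /partners ji_Cja.
Qed.

Lemma monotone_spares a : monotone (fun X => ((spares a X)%:R : R)).
Proof.
move=> X Y XY; have: spares a X ==> spares a Y.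
  rewrite /spares; case: (C i a) => //=.
  apply/implyP => /existsP [j /andP [ji_Cja Xj]].
  by apply/existsP; exists j; rewrite ji_Cja (implyP (XY j)).
by case: (spares a X) (spares a Y) => [] [].
Qed.

Lemma expect_spares a :
  expect (fun X => (spares a X)%:R) = (1 - (1 - p) ^+ (test_degree C a).-1) ^+ C i a.
Proof.
case Cia: (C i a); last first.
  by rewrite -[RHS](@expect_cst _ N p); apply: eq_expect => X; rewrite /spares Cia.
set S := [pred j | (j != i) && C j a].
have -> : (test_degree C a).-1 = #|S|.
  by rewrite test_degreeE (cardD1 i) inE Cia; apply: eq_card => j; rewrite !inE andbC.
rewrite -expect_all_zero -expect_cstB; apply: eq_expect => X; rewrite /spares Cia /=.
have -> : [exists j, (j != i) && C j a && X j] = ~~ [forall j, S j ==> ~~ X j].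
  by rewrite negb_forall; apply: eq_existsb => j; rewrite negb_imply negbK.
by case: [forall _, _]; rewrite /= ?subrr ?subr0.
Qed.

Lemma expect_mem_U0 :
  expect (fun X => (i \in U0 C X)%:R) =
  (1 - p) * expect (fun X => \prod_a (spares a X)%:R).
Proof.
rewrite -(expect_average_out p i) -expectZ; apply: eq_expect => X.
have spares_update b a : spares a (update X i b) = spares a X.
  rewrite /spares; congr (_ ==> _); apply: eq_existsb => j.
  by rewrite ffunE; case: eqP.
rewrite /average_out !mem_U0 !ffunE eqxx /= mulr0 add0r natr_forall.
by under eq_bigr do rewrite spares_update.
Qed.

Lemma partners_disjoint : girth_ge6 C ->
  forall a b k, a != b -> partners a k -> ~~ partners b k.
Proof.
move=> girth a b k a_b /andP [/andP [k_i Cka] Cia].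
apply/negP => /andP [/andP [_ Ckb] Cib].
have i_k : i != k by rewrite eq_sym.
by move: (girth i k a b i_k a_b); rewrite Cia Cib Cka Ckb.
Qed.

Lemma expect_spares_all_ge :
  \prod_a (1 - (1 - p) ^+ (test_degree C a).-1) ^+ C i a <=
  expect (fun X => \prod_a (spares a X)%:R).
Proof.
rewrite (eq_bigr _ (fun a _ => esym (expect_spares a))).
by apply: expect_big_mul_ge => // a; apply: monotone_spares.
Qed.

Lemma expect_spares_all_eq : girth_ge6 C ->
  expect (fun X => \prod_a (spares a X)%:R) =
  \prod_a (1 - (1 - p) ^+ (test_degree C a).-1) ^+ C i a.
Proof.
move=> girth; rewrite (eq_bigr _ (fun a _ => esym (expect_spares a))).
apply: (expect_big_mul_disjoint p (A := partners)); last exact: index_enum_uniq.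
  exact: spares_local.
exact: partners_disjoint.
Qed.

End VariableInU0.

Lemma expected_U0E (R : realFieldType) (N M : nat) (p : R) (C : 'M[bool]_(N, M)) :
  expected_U0 p C = \sum_i expect p (fun X => (i \in U0 C X)%:R).
Proof.
rewrite /expected_U0 /expect; under eq_bigr do rewrite natr_card mulr_sumr.
exact: exchange_big.
Qed.

Theorem lemma1 (R : realFieldType) (N M : nat) (p : R)
  (HN : (1 <= N)%N) (HM : (1 <= M)%N) (Hp0 : 0 < p) (Hp1 : p < 1)
  (C : 'M[bool]_(N, M)) :
  bound_B p C <= expected_U0 p C /\
  (girth_ge6 C -> expected_U0 p C = bound_B p C).
Proof.
have p_ge0 := ltW Hp0; have p_le1 := ltW Hp1.
rewrite expected_U0E /bound_B mulr_sumr; split => [|girth].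
  apply: ler_sum => i _; rewrite expect_mem_U0 ler_wpM2l ?subr_ge0 //.
  exact: expect_spares_all_ge.
by apply: eq_bigr => i _; rewrite expect_mem_U0 expect_spares_all_eq.
Qed.
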